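(* Let $X$ be a quasi-Banach rearrangement invariant space on $\mathbb{R}$ and let $p>0$. Then there exist a number $0<u\le p$ and a constant $c$ such that for every $n$ and all $f_1,\dots,f_n\in X$, $$\Big\|\Big(\sum_{i=1}^n|f_i|^p\Big)^{1/p}\Big\|_X\le c\Big(\sum_{i=1}^n\|f_i\|_X^u\Big)^{1/u}.$$
   Context: For measurable $f$, $f^*(s)=\sup\{t:\text{measure}\{|f|>t\}>s\}$. A rearrangement invariant (r.i.) space $X$ on $\mathbb{R}$ is a set of measurable functions (modulo a.e. equality) with a complete quasi-norm $\|\cdot\|_X$ such that: (1) if $g^*\le f^*$ and $f\in X$ then $g\in X$ and $\|g\|_X\le\|f\|_X$; (2) every simple function with support of finite measure is in $X$; (3) either $f_n\searrow 0$ implies $\|f_n\|_X\searrow 0$, or $0\le f_n\nearrow f$ with $\sup_n\|f_n\|_X<\infty$ implies $f\in X$ and $\|f\|_X=\sup_n\|f_n\|_X$. *)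

From HB Require Import structures.
From mathcomp Require Import all_boot all_order all_algebra.
From mathcomp Require Import all_classical all_reals all_analysis.
Set Implicit Arguments. Unset Strict Implicit. Unset Printing Implicit Defensive.
Import Order.TTheory GRing.Theory Num.Theory numFieldNormedType.Exports.
Local Open Scope classical_set_scope.
Local Open Scope ring_scope.

Definition decr_rearr {R : realType} (f : R -> R) (s : R) : \bar R :=
  ereal_sup [set t%:E | t in
    [set t : R | (s%:E < (lebesgue_measure [set x : R | (t < `|f x|)%R]))%E]].

Definition finsupp_simple {R : realType} (f : R -> R) : Prop :=
  measurable_fun setT f /\ finite_set (range f) /\
  (lebesgue_measure [set x : R | (f x != 0)%R] < +oo)%E.

(* X is a complete quasi-normed space of measurable functions on R
   (elements identified modulo a.e. equality through N) which is
   rearrangement invariant in the sense of (1),(2),(3). *)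
Definition qB_ri_space {R : realType} (X : set (R -> R)) (N : (R -> R) -> R)
  : Prop :=
  (forall f, X f -> measurable_fun setT f) /\
  X (fun _ => 0) /\
  (forall f g, X f -> X g -> X (f \+ g)) /\
  (forall (a : R) f, X f -> X (fun x => a * f x)) /\
  (forall f, X f -> 0 <= N f) /\
  (forall f, X f -> (N f = 0 <-> {ae lebesgue_measure, forall x, f x = 0})) /\
  (forall (a : R) f, X f -> N (fun x => a * f x) = `|a| * N f) /\
  (exists K : R, 1 <= K /\
     forall f g, X f -> X g -> N (f \+ g) <= K * (N f + N g)) /\
  (forall u : nat -> R -> R, (forall n, X (u n)) ->
     (forall e : R, 0 < e -> exists M, forall m n, (M <= m)%N -> (M <= n)%N ->
         N (u m \- u n) < e) ->
     exists g, X g /\ forall e : R, 0 < e -> exists M, forall n, (M <= n)%N ->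
         N (u n \- g) < e) /\
  (* (1) rearrangement invariance / lattice property *)
  (forall f g, X f -> measurable_fun setT g ->
     (forall s : R, 0 < s -> (decr_rearr g s <= decr_rearr f s)%E) ->
     X g /\ N g <= N f) /\
  (forall f, finsupp_simple f -> X f) /\
  (* (3) order continuity or Fatou property *)
  ((forall u : nat -> R -> R, (forall n, X (u n)) ->
      (forall n x, u n.+1 x <= u n x) ->
      (forall x, u n x @[n --> \oo] --> 0) ->
      N (u n) @[n --> \oo] --> 0)
   \/
   (forall (u : nat -> R -> R) (f : R -> R), (forall n, X (u n)) ->
      (forall n x, 0 <= u n x) ->
      (forall n x, u n x <= u n.+1 x) ->
      (forall x, (fun n => u n x) @ \oo --> f x) ->
      (exists B : R, forall n, N (u n) <= B) ->
      X f /\ (forall n, N (u n) <= N f) /\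
      (forall b : R, (forall n, N (u n) <= b) -> N f <= b))).

(* Aoki-Rolewicz argument.  Pointwise, the l^p-sum of the |f_i| over an index
   interval is at most 2^(1/p) times the sum of the l^p-sums over two
   subintervals, so by the lattice property (1) and the quasi-triangle
   inequality Phi(a, b) = N((sum_(a <= i < b) |f_i|^p)^(1/p)) satisfies
   Phi(a, b) <= C (Phi(a, m) + Phi(m, b)) with C = 2^(1/p) K.  Take r <= p with
   (3 C^2)^r <= 2 and split [a, b) at the index m where the partial sums of the
   N(f_i)^r cross half of their total S: by induction on the length, each of
   [a, m), {m}, [m + 1, b) has Phi^r <= S, whence Phi(a, b)^r <= (3 C^2)^r S <= 2 S. *)

From HB Require Import structures.
From mathcomp Require Import all_boot all_order all_algebra.
From mathcomp Require Import all_classical all_reals all_analysis.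
From mathcomp Require Import zify ring lra.
Import Order.TTheory GRing.Theory Num.Theory numFieldNormedType.Exports.
Local Open Scope classical_set_scope.
Local Open Scope ring_scope.

Lemma powR_addr_le {R : realType} (A B q : R) : 0 <= A -> 0 <= B -> 0 <= q ->
  (A + B) `^ q <= 2 `^ q * (A `^ q + B `^ q).
Proof.
move=> A0 B0 q0.
wlog AB : A B A0 B0 / A <= B.
  move=> H; have [/H|/ltW/H] := leP A B; first exact.
  by rewrite addrC [A `^ q + _]addrC; apply.
apply: (@le_trans _ _ ((2 * B) `^ q)).
  by apply: ge0_ler_powR; rewrite ?nnegrE ?addr_ge0 ?mulr_ge0 // mulr2n mulrDl mul1r lerD2r.
by rewrite powRM // ler_wpM2l ?powR_ge0 // lerDr powR_ge0.
Qed.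

Lemma powR_ege1 {R : realType} (a x : R) : 1 <= a -> 0 <= x -> 1 <= a `^ x.
Proof. by move=> a1 x0; rewrite -(powRr0 a); apply: ler_powR. Qed.

Lemma powR_le_powRV {R : realType} (x S r : R) : 0 <= x -> 0 < r ->
  x `^ r <= S -> x <= S `^ r^-1.
Proof.
move=> x0 r0 xS; have S0 : 0 <= S := le_trans (powR_ge0 _ _) xS.
rewrite -[x in x <= _]powRr1 // -(@mulfV _ r) ?gt_eqF // powRrM.
by apply: ge0_ler_powR; rewrite ?nnegrE ?powR_ge0 // invr_ge0 ltW.
Qed.

Lemma exists_powR_le2 {R : realType} (L p : R) : 1 < L -> 0 < p ->
  exists2 r : R, 0 < r <= p & L `^ r <= 2.
Proof.
move=> L1 p0; have lnL : 0 < ln L by exact: ln_gt0.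
have ln2 : 0 < ln (2 : R) by apply: ln_gt0; rewrite ltr1n.
exists (Order.min p (ln 2 / ln L)); first by rewrite lt_min p0 divr_gt0 // ge_min lexx.
apply: (@le_trans _ _ (L `^ (ln 2 / ln L))).
  by apply: ler_powR; [exact: ltW | rewrite ge_min lexx orbT].
rewrite /powR gt_eqF ?(lt_trans ltr01) //.
by rewrite divfK ?gt_eqF // lnK // posrE ltr0n.
Qed.

Lemma nat_crossing {R : realType} (s : nat -> R) (t : R) a b : (a < b)%N ->
  s a <= t -> t <= s b -> exists2 m, (a <= m < b)%N & s m <= t <= s m.+1.
Proof.
elim: b => // b IH; rewrite ltnS leq_eqVlt => /predU1P[<-|ab] sat tsb.
  by exists a; [rewrite leqnn ltnSn | apply/andP].
have [tb|/ltW bt] := leP t (s b).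
  by have [m /andP[am mb] hm] := IH ab sat tb; exists m; rewrite // am ltnS ltnW.
by exists b; [rewrite (ltnW ab) ltnSn | apply/andP].
Qed.

Lemma sum_split_half {R : realType} (v : nat -> R) a b :
  (forall i, 0 <= v i) -> (a < b)%N ->
  exists2 m, (a <= m < b)%N &
    [/\ 2 * \sum_(a <= i < m) v i <= \sum_(a <= i < b) v i,
        v m <= \sum_(a <= i < b) v i &
        2 * \sum_(m.+1 <= i < b) v i <= \sum_(a <= i < b) v i].
Proof.
move=> v0 ab; set S := \sum_(a <= i < b) v i.
pose s j := \sum_(a <= i < j) v i.
have S0 : 0 <= S by apply: sumr_ge0.
have [m /andP[am mb] /andP[smS Ssm]] : exists2 m, (a <= m < b)%N & s m <= S / 2 <= s m.+1.
  apply: nat_crossing => //; first by rewrite /s big_geq // divr_ge0.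
  by rewrite /s -/S; lra.
have Esm : s m.+1 = s m + v m by rewrite /s big_nat_recr.
have ES : S = s m.+1 + \sum_(m.+1 <= i < b) v i.
  by rewrite /S (big_cat_nat (leqW am) mb).
have sm0 : 0 <= s m by apply: sumr_ge0.
have suf0 : 0 <= \sum_(m.+1 <= i < b) v i by apply: sumr_ge0.
exists m; first by rewrite am.
by rewrite /s in smS Ssm Esm ES sm0; split; lra.
Qed.

Section AokiRolewicz.
Context {R : realType} {Phi : nat -> nat -> R} {w : nat -> R} {C r : R}.
Hypothesis Phi_ge0 : forall a b, 0 <= Phi a b.
Hypothesis Phi_nil : forall a, Phi a a = 0.
Hypothesis Phi1 : forall i, Phi i i.+1 <= w i.
Hypothesis Phi_split : forall a m b, (a <= m <= b)%N ->
  Phi a b <= C * (Phi a m + Phi m b).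
Hypothesis C_ge1 : 1 <= C.
Hypothesis r_gt0 : 0 < r.
Hypothesis C_r : (3 * C ^+ 2) `^ r <= 2.

Let C_ge0 : 0 <= C := le_trans ler01 C_ge1.

Lemma Phi_three_pieces a m b T : (a <= m < b)%N ->
  Phi a m <= T -> Phi m m.+1 <= T -> Phi m.+1 b <= T -> Phi a b <= 3 * C ^+ 2 * T.
Proof.
case/andP=> am mb Phi_am Phi_m Phi_mb.
have T0 : 0 <= T := le_trans (Phi_ge0 _ _) Phi_am.
have hmb : Phi m b <= C * (2 * T).
  apply: le_trans (@Phi_split m m.+1 b _) _; first by rewrite leqnSn mb.
  by apply: ler_wpM2l => //; rewrite mulrDl mul1r lerD.
apply: le_trans (@Phi_split a m b _) _; first by rewrite am ltnW.
have -> : 3 * C ^+ 2 * T = C * (T + C * (2 * T)) + C * (C - 1) * T by ring.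
rewrite -[leLHS]addr0 lerD ?mulr_ge0 ?subr_ge0 //.
by apply: ler_wpM2l => //; apply: lerD.
Qed.

Lemma aoki_rolewicz_bound a b : (a <= b)%N ->
  Phi a b `^ r <= 2 * \sum_(a <= i < b) w i `^ r.
Proof.
have [n] := ubnP (b - a); elim: n => // n IH in a b *; rewrite ltnS => ban.
rewrite leq_eqVlt => /predU1P[<-|ab].
  by rewrite Phi_nil powR0 ?gt_eqF // big_geq // mulr0.
set S := \sum_(a <= i < b) w i `^ r.
have [m /andP[am mb] [pre_le wm_le suf_le]] :=
  sum_split_half _ _ _ (fun i => powR_ge0 (w i) r) ab.
have piece c d : (c <= d)%N -> (d - c < b - a)%N ->
    2 * \sum_(c <= i < d) w i `^ r <= S -> Phi c d <= S `^ r^-1.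
  move=> cd dc h; apply: powR_le_powRV => //; apply: le_trans h.
  by apply: IH cd; apply: leq_trans dc _.
have wm : Phi m m.+1 <= S `^ r^-1.
  apply: powR_le_powRV => //; apply: le_trans wm_le.
  by apply: ge0_ler_powR; rewrite ?nnegrE ?(ltW r_gt0) // (le_trans _ (Phi1 m)).
have S0 : 0 <= S by apply: sumr_ge0 => i _; exact: powR_ge0.
apply: le_trans (_ : (3 * C ^+ 2 * S `^ r^-1) `^ r <= _).
  apply: ge0_ler_powR; rewrite ?nnegrE ?(ltW r_gt0) ?mulr_ge0 ?exprn_ge0 ?powR_ge0 //.
  apply: Phi_three_pieces wm _; first by rewrite am.
    by apply: piece pre_le => //; lia.
  by apply: piece suf_le => //; lia.
rewrite powRM ?mulr_ge0 ?exprn_ge0 ?powR_ge0 // -powRrM mulVf ?gt_eqF // powRr1 //.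
exact: ler_wpM2r.
Qed.

End AokiRolewicz.

Lemma measurable_normr_gt {R : realType} (g : R -> R) (t : R) :
  measurable_fun setT g -> measurable [set x : R | t < `|g x|].
Proof.
move=> mg; have := measurableT_comp (@measurable_realfun.normr_measurable R setT) mg.
move=> /(_ measurableT `]t, +oo[%classic (measurable_itv _)).
suff -> : [set x : R | t < `|g x|] = setT `&` (Num.norm \o g) @^-1` `]t, +oo[%classic by [].
by apply/seteqP; split=> x /=; rewrite in_itv /= andbT; [move=> ?; split | case].
Qed.

Lemma decr_rearr_le {R : realType} (f g : R -> R) :
  measurable_fun setT f -> measurable_fun setT g ->
  (forall x, `|g x| <= `|f x|) -> forall s, (decr_rearr g s <= decr_rearr f s)%E.
Proof.
move=> mf mg gf s; apply: ereal_sup_le => _ [t /= ht <-]; exists t => //=.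
apply: (lt_le_trans ht); apply: le_measure; rewrite ?inE.
- exact: measurable_normr_gt.
- exact: measurable_normr_gt.
- by move=> x /= /lt_le_trans; apply.
Qed.

Definition lp_sum {R : realType} (g : nat -> R -> R) (p : R) (a b : nat) (x : R) : R :=
  (\sum_(a <= i < b) `|g i x| `^ p) `^ p^-1.

Section LpSum.
Context {R : realType} {g : nat -> R -> R} {p : R}.
Hypothesis p_gt0 : 0 < p.

Lemma lp_sum_ge0 a b x : 0 <= lp_sum g p a b x.
Proof. exact: powR_ge0. Qed.

Lemma lp_sum_nil a b : (b <= a)%N -> lp_sum g p a b = fun=> 0.
Proof.
by move=> ba; apply/funext => x; rewrite /lp_sum big_geq // powR0 // invr_neq0 // gt_eqF.
Qed.

Lemma lp_sum1 i x : lp_sum g p i i.+1 x = `|g i x|.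
Proof. by rewrite /lp_sum big_nat1 -powRrM mulfV ?gt_eqF // powRr1. Qed.

Lemma lp_sum_split a m b x : (a <= m <= b)%N ->
  lp_sum g p a b x <= 2 `^ p^-1 * (lp_sum g p a m x + lp_sum g p m b x).
Proof.
case/andP=> am mb; rewrite /lp_sum (big_cat_nat am mb) /=.
apply: powR_addr_le; rewrite ?invr_ge0 ?(ltW p_gt0) //.
  by apply: sumr_ge0 => *; exact: powR_ge0.
by apply: sumr_ge0 => *; exact: powR_ge0.
Qed.

Lemma measurable_lp_sum a b : (forall i, measurable_fun setT (g i)) ->
  measurable_fun setT (lp_sum g p a b).
Proof.
move=> mg; apply: (measurableT_comp (measurable_realfun.measurable_powR _)).
apply: measurable_sum => i; apply: (measurableT_comp (measurable_realfun.measurable_powR _)).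
exact: measurableT_comp (@measurable_realfun.normr_measurable R setT) (mg i).
Qed.

End LpSum.

Section QuasiBanachRI.
Context {R : realType} {X : set (R -> R)} {N : (R -> R) -> R}.
Hypothesis hX : qB_ri_space X N.

Let X_meas f : X f -> measurable_fun setT f.
Proof. by case: hX => X_meas _; apply: X_meas. Qed.
Let X0 : X (fun=> 0).
Proof. by case: hX => _ [? _]. Qed.
Let XD f h : X f -> X h -> X (f \+ h).
Proof. by case: hX => _ [_ [XD _]]; apply: XD. Qed.
Let XZ (c : R) f : X f -> X (fun x => c * f x).
Proof. by case: hX => _ [_ [_ [XZ _]]]; apply: XZ. Qed.
Let N_ge0 f : X f -> 0 <= N f.
Proof. by case: hX => _ [_ [_ [_ [N_ge0 _]]]]; apply: N_ge0. Qed.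
Let NZ (c : R) f : X f -> N (fun x => c * f x) = `|c| * N f.
Proof. by case: hX => _ [_ [_ [_ [_ [_ [NZ _]]]]]]; apply: NZ. Qed.

Lemma N0 : N (fun=> 0) = 0.
Proof. by have := NZ 0 _ X0; rewrite normr0 !mul0r. Qed.

Lemma ri_dominated (f h : R -> R) : X f -> measurable_fun setT h ->
  (forall x, `|h x| <= `|f x|) -> X h /\ N h <= N f.
Proof.
move=> Xf mh hf; have [_ [_ [_ [_ [_ [_ [_ [_ [_ [ri _]]]]]]]]]] := hX.
by apply: ri => // s _; apply: decr_rearr_le => //; exact: X_meas.
Qed.

Context {g : nat -> R -> R} {p : R}.
Hypotheses (Xg : forall i, X (g i)) (p_gt0 : 0 < p).

Let lp_sum_split_in a m b :
  X (lp_sum g p a m) -> X (lp_sum g p m b) -> (a <= m <= b)%N ->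
  X (lp_sum g p a b) /\
  N (lp_sum g p a b) <= 2 `^ p^-1 * N (lp_sum g p a m \+ lp_sum g p m b).
Proof.
move=> Xam Xmb amb; rewrite -[2 `^ _]ger0_norm ?powR_ge0 // -NZ; last exact: XD.
apply: ri_dominated; first exact/XZ/XD.
  by apply: measurable_lp_sum => i; exact: X_meas.
move=> x; rewrite !ger0_norm ?mulr_ge0 ?addr_ge0 ?powR_ge0 ?lp_sum_ge0 //.
exact: lp_sum_split.
Qed.

Lemma N_lp_sum1 i : X (lp_sum g p i i.+1) /\ N (lp_sum g p i i.+1) <= N (g i).
Proof.
apply: ri_dominated => //; first by apply: measurable_lp_sum => j; exact: X_meas.
by move=> x; rewrite lp_sum1 // normr_id.
Qed.

Lemma lp_sum_in a b : X (lp_sum g p a b).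
Proof.
elim: b => [|b IH]; first by rewrite lp_sum_nil.
have [ab|ba] := leqP a b; last by rewrite lp_sum_nil.
by apply: (lp_sum_split_in _ _ _ IH (N_lp_sum1 b).1 _).1; rewrite ab leqnSn.
Qed.

Lemma N_lp_sum_split (K : R) :
  (forall f h, X f -> X h -> N (f \+ h) <= K * (N f + N h)) ->
  forall a m b, (a <= m <= b)%N ->
  N (lp_sum g p a b) <= 2 `^ p^-1 * K * (N (lp_sum g p a m) + N (lp_sum g p m b)).
Proof.
move=> N_triangle a m b amb.
apply: le_trans (lp_sum_split_in _ _ _ (lp_sum_in _ _) (lp_sum_in _ _) amb).2 _.
by rewrite -mulrA ler_wpM2l ?powR_ge0 // N_triangle //; exact: lp_sum_in.
Qed.

Lemma N_lp_sum_le (K r : R) : 1 <= K ->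
  (forall f h, X f -> X h -> N (f \+ h) <= K * (N f + N h)) ->
  0 < r -> (3 * (2 `^ p^-1 * K) ^+ 2) `^ r <= 2 ->
  forall n, N (lp_sum g p 0 n) <= 2 `^ r^-1 * (\sum_(0 <= i < n) N (g i) `^ r) `^ r^-1.
Proof.
move=> K_ge1 N_triangle r_gt0 C_r n.
have C_ge1 : 1 <= 2 `^ p^-1 * K.
  by rewrite mulr_ege1 // powR_ege1 ?ler1n // invr_ge0 ltW.
have Phi_nil a : N (lp_sum g p a a) = 0 by rewrite lp_sum_nil // N0.
have := aoki_rolewicz_bound (fun _ _ => N_ge0 _ (lp_sum_in _ _)) Phi_nil
  (fun i => (N_lp_sum1 i).2) (N_lp_sum_split K N_triangle) C_ge1 r_gt0 C_r 0 n (leq0n n).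
move=> /(powR_le_powRV _ _ _ (N_ge0 _ (lp_sum_in _ _)) r_gt0).
by rewrite powRM ?sumr_ge0 // => i _; exact: powR_ge0.
Qed.

End QuasiBanachRI.

Theorem lemma6 (R : realType) (X : set (R -> R)) (N : (R -> R) -> R)
  (hX : qB_ri_space X N) (p : R) (hp : 0 < p) :
  exists (u c : R), 0 < u /\ u <= p /\
    forall (n : nat) (f : 'I_n -> R -> R), (forall i, X (f i)) ->
      let F := fun x => (\sum_(i < n) `|f i x| `^ p) `^ p^-1 in
      X F /\ N F <= c * (\sum_(i < n) N (f i) `^ u) `^ u^-1.
Proof.
have [_ [X0 [_ [_ [_ [_ [_ [[K [K_ge1 N_triangle]] _]]]]]]]] := hX.
have L_gt1 : 1 < 3 * (2 `^ p^-1 * K) ^+ 2.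
  apply: (@lt_le_trans _ _ 3); first by rewrite ltr1n.
  by rewrite ler_peMr // exprn_ege1 // mulr_ege1 // powR_ege1 ?ler1n // invr_ge0 ltW.
have [r /andP[r_gt0 r_le_p] C_r] := exists_powR_le2 _ _ L_gt1 hp.
exists r, (2 `^ r^-1); do 2!split => //.
move=> n f Xf F.
pose g i := if @insub _ (fun k => k < n)%N 'I_n i is Some j then f j else fun=> 0.
have Xg i : X (g i) by rewrite /g; case: insub.
have Eg i : g (nat_of_ord i) = f i by rewrite /g valK.
have -> : F = lp_sum g p 0 n.
  by apply/funext => x; rewrite /lp_sum big_mkord; under eq_bigr do rewrite Eg.
split; first exact: (lp_sum_in hX Xg hp).
have := N_lp_sum_le hX Xg hp K r K_ge1 N_triangle r_gt0 C_r n.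
by rewrite big_mkord; under eq_bigr => i _ do rewrite Eg.
Qed.
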